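(* Let $p$ be a prime, $n\geq1$ an integer and $\alpha\in\mathbb{Z}_p$. Then $\mathfrak{M}_{p,\alpha}^n\cap\mathbb{Z}[X]=(p^n,X-a)$, where $a\in\mathbb{Z}$ is any integer with $\alpha\equiv a\pmod{p^n}$. This ideal is $(p,X-j)$-primary, where $j\in\{0,\dots,p-1\}$, $j\equiv\alpha\pmod p$. Moreover, for $\beta\in\mathbb{Z}_p$, $\mathfrak{M}_{p,\alpha}^n\cap\mathbb{Z}[X]=\mathfrak{M}_{p,\beta}^n\cap\mathbb{Z}[X]$ if and only if $\alpha\equiv\beta\pmod{p^n}$.
   Context: $\mathrm{Int}(\mathbb{Z})=\{f\in\mathbb{Q}[X] : f(\mathbb{Z})\subseteq\mathbb{Z}\}$; $\mathbb{Z}_p$ is the ring of $p$-adic integers; $\mathfrak{M}_{p,\alpha}=\{f\in\mathrm{Int}(\mathbb{Z}) : f(\alpha)\in p\mathbb{Z}_p\}$ and $\mathfrak{M}_{p,\alpha}^n$ is its $n$-th power as an ideal of $\mathrm{Int}(\mathbb{Z})$. It is known (Loper) that $\mathfrak{M}_{p,\alpha}^n=\{f\in\mathrm{Int}(\mathbb{Z}) : f(\alpha)\in p^n\mathbb{Z}_p\}$. *)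

From HB Require Import structures.
From mathcomp Require Import all_boot all_order all_algebra.
Set Implicit Arguments. Unset Strict Implicit. Unset Printing Implicit Defensive.
Import Order.TTheory GRing.Theory Num.Theory.
Local Open Scope ring_scope.

(* p-adic integers Z_p, modelled as coherent sequences of integer
   approximations: zp_seq a k is an integer congruent to a modulo p^k. *)
Record padic (p : nat) := MkPadic {
  zp_seq : nat -> int;
  zp_coh : forall k : nat, (zp_seq k.+1 == zp_seq k %[mod (p ^ k)%:Z])%Z }.

Definition intvalued (f : {poly rat}) : Prop :=
  forall z : int, f.[z%:~R] \is a Num.int.

(* f(alpha) \in p^n Z_p, for f in Int(Z): f(alpha) is the p-adic limit of
   f(a_k), so this holds iff p^n divides the integer f(a_k) for all
   large enough k. *)
Definition val_in_pn (p n : nat) (alpha : padic p) (f : {poly rat}) : Prop :=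
  exists K : nat, forall k : nat, (K <= k)%N ->
    exists z : int, f.[(zp_seq alpha k)%:~R] = z%:~R /\ ((p ^ n)%:Z %| z)%Z.

Definition Mpow (p n : nat) (alpha : padic p) (f : {poly rat}) : Prop :=
  intvalued f /\ val_in_pn n alpha f.

Definition MpowZ (p n : nat) (alpha : padic p) (g : {poly int}) : Prop :=
  Mpow n alpha (map_poly intr g).

Definition ideal2 (u v : {poly int}) (g : {poly int}) : Prop :=
  exists r s : {poly int}, g = r * u + s * v.

Definition radical (I : {poly int} -> Prop) (g : {poly int}) : Prop :=
  exists m : nat, I (g ^+ m).

Definition primary (I : {poly int} -> Prop) : Prop :=
  ~ I 1 /\ forall f g : {poly int}, I (f * g) -> I f \/ radical I g.

Definition primary_for (I P : {poly int} -> Prop) : Prop :=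
  primary I /\ forall g, radical I g <-> P g.

(* For g in Z[X] and a_n the n-th approximation of alpha, g(alpha) is
   congruent to g(a_n) modulo p^n, so g lies in M^n iff p^n | g(a_n), and by
   the factor theorem g = q (X - a_n) + g(a_n) iff g lies in (p^n, X - a_n).
   As p is prime, p^n | g(a_n)^m for some m iff p | g(a_n), which yields the
   radical (p, X - j); and p^n | f(a_n) g(a_n) with p not dividing g(a_n)
   forces p^n | f(a_n) by Gauss's lemma, which yields primarity. *)

From HB Require Import structures.
From mathcomp Require Import all_boot all_order all_algebra.
From Stdlib Require Import Setoid.
Import Order.TTheory GRing.Theory Num.Theory.
Local Open Scope ring_scope.

Lemma dvdz_eq_mod {d x y : int} :
  (x == y %[mod d])%Z -> (d %| x)%Z = (d %| y)%Z.
Proof. by move=> /eqP Exy; apply/dvdz_mod0P/dvdz_mod0P; rewrite Exy. Qed.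

Lemma eqz_mod_dvd_trans {d e x y : int} :
  (d %| e)%Z -> (x == y %[mod e])%Z -> (x == y %[mod d])%Z.
Proof. by rewrite !eqz_mod_dvd => /dvdz_trans; apply. Qed.

Lemma poly_XsubC_factor {R : comNzRingType} (g : {poly R}) (a : R) :
  exists q : {poly R}, g = q * ('X - a%:P) + g.[a]%:P.
Proof.
have /factor_theorem [q Eq] : root (g - g.[a]%:P) a.
  by rewrite rootE !hornerE subrr.
by exists q; rewrite -Eq subrK.
Qed.

Lemma horner_eq_mod (g : {poly int}) {d x y : int} :
  (x == y %[mod d])%Z -> (g.[x] == g.[y] %[mod d])%Z.
Proof.
have [q {1}->] := poly_XsubC_factor g y.
by rewrite !hornerE !eqz_mod_dvd addrK => /(dvdz_mull q.[x]).
Qed.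

Lemma zp_seq_eq_mod {p : nat} (a : padic p) {k m : nat} : (k <= m)%N ->
  (zp_seq a m == zp_seq a k %[mod (p ^ k)%:Z])%Z.
Proof.
elim: m => [|m IH]; first by rewrite leqn0 => /eqP->.
rewrite leq_eqVlt => /predU1P[->//|]; rewrite ltnS => le_km.
have pk_pm : ((p ^ k)%:Z %| (p ^ m)%:Z)%Z by rewrite dvdzE /= dvdn_exp2l.
by rewrite (eqP (eqz_mod_dvd_trans pk_pm (zp_coh a m))) IH.
Qed.

Lemma MpowZE (p n : nat) (alpha : padic p) (g : {poly int}) :
  MpowZ n alpha g <-> ((p ^ n)%:Z %| g.[zp_seq alpha n])%Z.
Proof.
have evalE (z : int) : (map_poly intr g).[z%:~R] = (g.[z])%:~R :> rat.
  by rewrite horner_map.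
have dvd_evalE k : (n <= k)%N -> ((p ^ n)%:Z %| g.[zp_seq alpha k])%Z =
                                 ((p ^ n)%:Z %| g.[zp_seq alpha n])%Z.
  by move=> le_nk; apply/dvdz_eq_mod/horner_eq_mod/zp_seq_eq_mod.
split=> [[_ [K HK]] | dvd_gn].
  have [z [/[!evalE] /intr_inj <-]] := HK (maxn K n) (leq_maxl _ _).
  by rewrite dvd_evalE ?leq_maxr.
split=> [z | ]; first by rewrite evalE intr_int.
by exists n => k le_nk; exists g.[zp_seq alpha k]; rewrite evalE dvd_evalE.
Qed.

Lemma ideal2_XsubCE (d a : int) (g : {poly int}) :
  ideal2 d%:P ('X - a%:P) g <-> (d %| g.[a])%Z.
Proof.
split=> [[r [s ->]] | /dvdzP [c Egc]].
  by rewrite !hornerE subrr mulr0 addr0 dvdz_mull.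
have [q Eg] := poly_XsubC_factor g a.
by exists c%:P, q; rewrite Eg Egc polyCM addrC.
Qed.

Lemma dvdz_pexp_exp_prime {p n : nat} (x : int) : prime p -> (0 < n)%N ->
  (exists m : nat, ((p ^ n)%:Z %| x ^+ m)%Z) <-> (p%:Z %| x)%Z.
Proof.
move=> p_pr n_gt0; rewrite dvdzE; split=> [[m] | p_x].
  rewrite dvdzE abszX /= => /(dvdn_trans (dvdn_exp n_gt0 (dvdnn p))).
  by rewrite Euclid_dvdX // => /andP[].
by exists n; rewrite dvdzE abszX dvdn_exp2r.
Qed.

Lemma Gauss_dvdz_prime_pow (p n : nat) (x y : int) : prime p ->
  ~~ (p%:Z %| y)%Z -> ((p ^ n)%:Z %| x * y)%Z = ((p ^ n)%:Z %| x)%Z.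
Proof.
move=> p_pr p_y; rewrite !dvdzE abszM Gauss_dvdl // coprimeXl //.
by rewrite prime_coprime.
Qed.

Section MpowZ.

Variables (p n : nat) (alpha : padic p).
Hypotheses (p_pr : prime p) (n_gt0 : (0 < n)%N).

Lemma radical_MpowZE (g : {poly int}) :
  radical (MpowZ n alpha) g <-> (p%:Z %| g.[zp_seq alpha n])%Z.
Proof.
have radE := dvdz_pexp_exp_prime g.[zp_seq alpha n] p_pr n_gt0.
split=> [[m /MpowZE dvd_gm] | /radE [m dvd_gm]].
  by apply/radE; exists m; rewrite -horner_exp.
by exists m; apply/MpowZE; rewrite horner_exp.
Qed.

Lemma MpowZ_primary : primary (MpowZ n alpha).
Proof.
split=> [/MpowZE | f g /MpowZE].
  by rewrite hornerC dvdz1 /= -[X in _ == X](expn0 p) eqn_exp2l ?prime_gt1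
             // eqn0Ngt n_gt0.
rewrite hornerM; have [p_g _ | p_g] := boolP (p%:Z %| g.[zp_seq alpha n])%Z.
  by right; apply/radical_MpowZE.
by rewrite Gauss_dvdz_prime_pow // => dvd_f; left; apply/MpowZE.
Qed.

Lemma MpowZ_ext_eq_mod (beta : padic p) :
  (forall g, MpowZ n alpha g <-> MpowZ n beta g) <->
  (zp_seq alpha n == zp_seq beta n %[mod (p ^ n)%:Z])%Z.
Proof.
split=> [sameM | /horner_eq_mod eq_ab g]; last first.
  by rewrite !MpowZE (dvdz_eq_mod (eq_ab g)).
have := (sameM ('X - (zp_seq alpha n)%:P)).1.
rewrite !MpowZE !hornerXsubC subrr dvdz0 => /(_ isT).
by rewrite eqz_mod_dvd -opprB rpredN.
Qed.

End MpowZ.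

Theorem mainTheorem7 (p n : nat) (alpha : padic p) :
  prime p -> (1 <= n)%N ->
  (forall a : int, (a == zp_seq alpha n %[mod (p ^ n)%:Z])%Z ->
     forall g : {poly int},
       MpowZ n alpha g <-> ideal2 ((p ^ n)%:Z)%:P ('X - a%:P) g)
  /\ (forall j : nat, (j < p)%N -> (j%:Z == zp_seq alpha 1 %[mod p%:Z])%Z ->
       primary_for (MpowZ n alpha) (ideal2 (p%:Z)%:P ('X - (j%:Z)%:P)))
  /\ (forall beta : padic p,
       (forall g : {poly int}, MpowZ n alpha g <-> MpowZ n beta g) <->
       (zp_seq alpha n == zp_seq beta n %[mod (p ^ n)%:Z])%Z).
Proof.
move=> p_pr n_gt0; split; last split; last exact: MpowZ_ext_eq_mod.
  move=> a /horner_eq_mod eq_a g.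
  by rewrite MpowZE ideal2_XsubCE (dvdz_eq_mod (eq_a g)).
move=> j _ eq_j; split; first exact: MpowZ_primary.
have eq_jn : (j%:Z == zp_seq alpha n %[mod p%:Z])%Z.
  have := zp_seq_eq_mod alpha n_gt0; rewrite expn1 => /eqP ->.
  by rewrite (eqP eq_j).
move=> g; rewrite radical_MpowZE // ideal2_XsubCE.
by rewrite (dvdz_eq_mod (horner_eq_mod g eq_jn)).
Qed.
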